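(* Under the standing assumptions of the context, the trigonometric polynomial $u_{0,l}:=u_l/u_l(0)$ is a pure mask: it has no pair of symmetric zeros and no cycle (including the trivial cycle $\{1\}$).
   Context: Let $\theta$ be odd, non-decreasing, $C^2$, with $\theta(\omega)=\pi/4$ for $\omega>\pi/3$; fix $\pi/3\le\omega_0<\pi/2$. Meyer scaling function (Fourier transform): $\widehat{\varphi^M}(\omega)=1$ for $|\omega|\le2\omega_0$, $=\cos(\frac\pi4+\theta(\frac{\pi}{3(\pi-2\omega_0)}(|\omega|-\pi)))$ for $2\omega_0<|\omega|\le2\pi-2\omega_0$, $=0$ otherwise. Meyer mask: $2\pi$-periodic $m^M$ with $m^M(\omega)=\widehat{\varphi^M}(2\omega)$ on $[-\pi,\pi]$. $\|\cdot\|_C$: sup norm on $[-\pi,\pi]$. A linear method of summation $(\lambda_{n,k})$ maps $f$ with Fourier coefficients $a_k,b_k$ to $u_n(f,\omega)=\frac{a_0}2+\sum_{k=1}^n\lambda_{n,k}(a_k\cos k\omega+b_k\sin k\omega)$. $m^M_l:=m^M/(\cos\frac\omega2)^{2l}$. Standing assumptions: a method and a sequence $n(l)$ are fixed with $u_l:=u_{n(l)}(m^M_l,\cdot)$, $u_{1,l}:=u_{n(l)}((m^M_l)',\cdot)$ satisfying $\|u_l-m^M_l\|_C=o(l^{-1})$, $\|u_{1,l}-(m^M_l)'\|_C=o(1)$, $u_l(\pi)\ne0$; $l_0$ is fixed with $\inf_{l\ge l_0}|u_l(0)|>0$ and $l\ge l_0$. For a $2\pi$-periodic mask $m$: $\pm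 e^{i\bar\omega}$ is a pair of symmetric roots if $m(\bar\omega)=m(\bar\omega+\pi)=0$; a set $\{b_1,\dots,b_n\}$ of distinct complex numbers is cyclic if $b_{j+1}=b_j^2$ for $j=1,\dots,n$ with $b_{n+1}=b_1$; a cyclic set is a cycle of $m$ if $m(\omega+\pi)=0$ whenever $e^{i\omega}=b_j$ for some $j$; the trivial cycle is $\{1\}$; $m$ is pure if it has neither pairs of symmetric zeros nor cycles. *)

From Stdlib Require Import Reals Lra.
From Coquelicot Require Import Coquelicot.
Open Scope R_scope.

(* Meyer scaling function (Fourier transform), depending on theta and omega0. *)
Definition phiM (theta : R -> R) (w0 : R) (w : R) : R :=
  if Rle_dec (Rabs w) (2 * w0) then 1
  else if Rle_dec (Rabs w) (2 * PI - 2 * w0) then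
    cos (PI / 4 + theta (PI / (3 * (PI - 2 * w0)) * (Rabs w - PI)))
  else 0.

(* reduction of w modulo 2*PI into [-PI, PI) :  w - 2 PI floor((w+PI)/(2PI)) ;
   for real x, (up x - 1) is the floor of x *)
Definition red2pi (w : R) : R :=
  w - 2 * PI * IZR (up ((w + PI) / (2 * PI)) - 1).

(* Meyer mask: 2pi-periodic, equal to phiM(2w) on [-pi,pi]
   (consistent at the endpoints since phiM is even). *)
Definition mM (theta : R -> R) (w0 : R) (w : R) : R :=
  phiM theta w0 (2 * red2pi w).

(* m^M_l = m^M / (cos (w/2))^(2l)  (m^M vanishes near the zeros of cos(w/2)). *)
Definition mMl (theta : R -> R) (w0 : R) (l : nat) (w : R) : R :=
  mM theta w0 w / (cos (w / 2)) ^ (2 * l).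

Definition fa (f : R -> R) (k : nat) : R :=
  / PI * RInt (fun x => f x * cos (INR k * x)) (- PI) PI.
Definition fb (f : R -> R) (k : nat) : R :=
  / PI * RInt (fun x => f x * sin (INR k * x)) (- PI) PI.

Definition usum (lam : nat -> nat -> R) (n : nat) (f : R -> R) (w : R) : R :=
  fa f 0 / 2 +
  sum_n_m (fun k => lam n k * (fa f k * cos (INR k * w) + fb f k * sin (INR k * w)))
    1 n.

Definition cis (w : R) : C := (cos w, sin w).

(* pair of symmetric roots +- e^{i wb} of a mask m *)
Definition sym_root_pair (m : R -> R) (wb : R) : Prop :=
  m wb = 0 /\ m (wb + PI) = 0.

Definition cyclic_set (n : nat) (b : nat -> C) : Prop :=
  (1 <= n)%nat /\
  (forall i j, (i < n)%nat -> (j < n)%nat -> b i = b j -> i = j) /\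
  (forall j, (j < n)%nat -> b ((j + 1) mod n)%nat = (b j * b j)%C).

Definition cycle_of (m : R -> R) (n : nat) (b : nat -> C) : Prop :=
  cyclic_set n b /\
  (forall j, (j < n)%nat ->
     Cmod (b j) = 1 /\ (forall w, cis w = b j -> m (w + PI) = 0)).

Definition pure_mask (m : R -> R) : Prop :=
  (~ exists wb, sym_root_pair m wb) /\ (~ exists n b, cycle_of m n b).

(** By the approximation hypothesis, [u_l] is uniformly within [cos(pi/4)/2] of
    [m^M_l], which is at least [cos(pi/4)] on [[-pi/2, pi/2]]. Hence every zero
    [v] of [u_l] (equivalently of [u_{0,l}]) satisfies [cos v < 0]. Two zeros
    differing by [pi] cannot both lie there, so there is no pair of symmetric
    zeros. Every point [b] of a cycle is [e^{iw}] with [cos (w + pi) < 0], i.e.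
    [Re b > 0]; at a point of minimal real part [a], the next point [b^2] has
    real part [2a^2 - 1 >= a], forcing [b = 1] and [u_l(pi) = 0], which is
    excluded. *)
From Stdlib Require Import Reals Lra Lia Psatz ZArith.
From Coquelicot Require Import Coquelicot.
Open Scope R_scope.

Lemma cos_period_Z x k : cos (x + 2 * IZR k * PI) = cos x.
Proof.
destruct (Z_le_gt_dec 0 k) as [k_ge0 | k_lt0].
- rewrite <- (Z2Nat.id k) by lia. rewrite <- INR_IZR_INZ. apply cos_period.
- set (y := x + 2 * IZR k * PI).
  replace x with (y + 2 * INR (Z.to_nat (- k)) * PI).
  + symmetry; apply cos_period.
  + unfold y; rewrite INR_IZR_INZ, Z2Nat.id, opp_IZR by lia; ring.
Qed.

Lemma sin_period_Z x k : sin (x + 2 * IZR k * PI) = sin x.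
Proof.
destruct (Z_le_gt_dec 0 k) as [k_ge0 | k_lt0].
- rewrite <- (Z2Nat.id k) by lia. rewrite <- INR_IZR_INZ. apply sin_period.
- set (y := x + 2 * IZR k * PI).
  replace x with (y + 2 * INR (Z.to_nat (- k)) * PI).
  + symmetry; apply sin_period.
  + unfold y; rewrite INR_IZR_INZ, Z2Nat.id, opp_IZR by lia; ring.
Qed.

Lemma usum_period_Z lam n f w k : usum lam n f (w + 2 * IZR k * PI) = usum lam n f w.
Proof.
unfold usum. f_equal. apply sum_n_m_ext. intro j.
replace (INR j * (w + 2 * IZR k * PI))
  with (INR j * w + 2 * IZR (Z.of_nat j * k) * PI)
  by (rewrite mult_IZR, <- INR_IZR_INZ; ring).
now rewrite cos_period_Z, sin_period_Z.
Qed.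

Lemma reduce_mod_2PI v : exists w k, - PI <= w <= PI /\ v = w + 2 * IZR k * PI.
Proof.
set (x := (v + PI) / (2 * PI)).
destruct (archimed x) as [up_gt up_le].
exists (v - 2 * IZR (up x) * PI + 2 * PI), (up x - 1)%Z.
assert (HPI := PI_RGT_0).
assert (v_eq : v = 2 * PI * x - PI) by (unfold x; field; lra).
rewrite minus_IZR. split; [|ring].
rewrite v_eq. split; nra.
Qed.

Lemma red2pi_id w : - (PI / 2) <= w <= PI / 2 -> red2pi w = w.
Proof.
intro Hw. assert (HPI := PI_RGT_0). unfold red2pi.
set (t := (w + PI) / (2 * PI)).
assert (t_eq : t * (2 * PI) = w + PI) by (unfold t; field; lra).
assert (up t = 1%Z) as -> by (symmetry; apply tech_up; nra).
change (IZR (1 - 1)) with 0. ring.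
Qed.

Lemma cos_neg_right_half w : - PI <= w <= PI -> 0 <= cos w -> - (PI / 2) <= w <= PI / 2.
Proof.
intros Hw Hcos.
destruct (Rle_dec w (PI / 2)) as [w_le | w_gt].
- destruct (Rle_dec (- (PI / 2)) w) as [w_ge | w_lt]; [lra|].
  rewrite <- cos_neg in Hcos. pose proof (cos_lt_0 (- w)). lra.
- pose proof (cos_lt_0 w). lra.
Qed.

Lemma root_cos_lt0 (u f : R -> R) (delta : R) :
  (forall w k, u (w + 2 * IZR k * PI) = u w) ->
  (forall w, - (PI / 2) <= w <= PI / 2 -> delta <= f w) ->
  (forall w, - PI <= w <= PI -> Rabs (u w - f w) < delta) ->
  forall v, u v = 0 -> cos v < 0.
Proof.
intros u_per f_ge u_close v uv0.
destruct (reduce_mod_2PI v) as [w [k [Hw ->]]].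
rewrite u_per in uv0. rewrite cos_period_Z.
destruct (Rlt_or_le (cos w) 0) as [cos_lt | cos_ge]; [exact cos_lt|].
specialize (f_ge w (cos_neg_right_half w Hw cos_ge)).
specialize (u_close w Hw). rewrite uv0, Rminus_0_l, Rabs_Ropp in u_close.
pose proof (Rle_abs (f w)). lra.
Qed.

Section MeyerMask.
Variables (theta : R -> R) (w0 : R).
Hypotheses (Hodd : forall x, theta (- x) = - theta x)
  (Hmono : forall x y, x <= y -> theta x <= theta y)
  (Hconst : forall x, PI / 3 < x -> theta x = PI / 4)
  (Hw0 : PI / 3 <= w0 < PI / 2).

(** On [|x| <= pi] the argument of [theta] is [<= 0], so [theta] takes values
    in [[-pi/4, 0]] and the cosine argument stays in [[0, pi/4]]. *)
Lemma phiM_ge_cos_PI4 x : Rabs x <= PI -> cos (PI / 4) <= phiM theta w0 x.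
Proof.
intro Hx. assert (HPI := PI_RGT_0). assert (HPI4 := PI_4).
unfold phiM. destruct (Rle_dec (Rabs x) (2 * w0)); [apply COS_bound|].
destruct (Rle_dec (Rabs x) (2 * PI - 2 * w0)); [|lra].
set (s := PI / (3 * (PI - 2 * w0)) * (Rabs x - PI)).
assert (scale_pos : 0 < PI / (3 * (PI - 2 * w0))) by (apply Rdiv_lt_0_compat; lra).
assert (s_le0 : s <= 0) by (unfold s; nra).
assert (theta0 : theta 0 = 0) by (pose proof (Hodd 0) as H; rewrite Ropp_0 in H; lra).
assert (theta_s_le0 : theta s <= 0) by (rewrite <- theta0; apply Hmono; lra).
assert (theta_s_ge : theta (- s) <= PI / 4).
{ rewrite <- (Hconst (Rmax (- s) 2)); [apply Hmono, Rmax_l|].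
  pose proof (Rmax_r (- s) 2). lra. }
rewrite <- (Ropp_involutive s) in theta_s_le0 |- *.
rewrite Hodd in theta_s_le0 |- *.
apply cos_decr_1; lra.
Qed.

Lemma mMl_ge_cos_PI4 l w :
  - (PI / 2) <= w <= PI / 2 -> cos (PI / 4) <= mMl theta w0 l w.
Proof.
intro Hw. assert (HPI := PI_RGT_0).
unfold mMl, mM. rewrite red2pi_id by exact Hw.
assert (phi_ge := phiM_ge_cos_PI4 (2 * w) ltac:(apply Rabs_le; lra)).
assert (cos_PI4_pos : 0 < cos (PI / 4)) by (apply cos_gt_0; lra).
set (c := cos (w / 2)).
assert (c_pos : 0 < c) by (apply cos_gt_0; lra).
assert (c_le1 : c <= 1) by apply COS_bound.
assert (pow_pos : 0 < c ^ (2 * l)) by (apply pow_lt; exact c_pos).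
assert (pow_le1 : c ^ (2 * l) <= 1)
  by (rewrite <- (pow1 (2 * l)); apply pow_incr; lra).
assert (inv_ge1 : 1 <= / c ^ (2 * l))
  by (rewrite <- Rinv_1; apply Rinv_le_contravar; assumption).
unfold Rdiv. nra.
Qed.

End MeyerMask.

Lemma no_sym_root_pair_of_root_cos_lt0 (m : R -> R) :
  (forall v, m v = 0 -> cos v < 0) -> ~ exists wb, sym_root_pair m wb.
Proof.
intros root_cos [wb [m_wb m_wb_pi]].
apply root_cos in m_wb. apply root_cos in m_wb_pi.
rewrite neg_cos in m_wb_pi. lra.
Qed.

Lemma Cmod_eq1_sq (z : C) : Cmod z = 1 -> fst z * fst z + snd z * snd z = 1.
Proof.
destruct z as [a c]. unfold Cmod; cbn [fst snd]. intro Hmod.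
assert (sq_ge0 : 0 <= a ^ 2 + c ^ 2) by nra.
pose proof (Rsqr_sqrt _ sq_ge0) as E. rewrite Hmod in E. unfold Rsqr in E. nra.
Qed.

Lemma Cmod_eq1_cis (z : C) : Cmod z = 1 -> exists w, cis w = z.
Proof.
intro Hmod. pose proof (Cmod_eq1_sq z Hmod) as Hsq.
destruct z as [a c]; cbn [fst snd] in Hsq. unfold cis.
assert (a_bound : -1 <= a <= 1) by nra.
assert (sqrt_eq : sqrt (1 - a²) = Rabs c).
{ replace (1 - a²) with (Rsqr c) by (unfold Rsqr; lra). apply sqrt_Rsqr_abs. }
destruct (Rle_lt_dec 0 c) as [c_ge0 | c_lt0].
- exists (acos a). rewrite cos_acos, sin_acos, sqrt_eq, Rabs_pos_eq by assumption.
  reflexivity.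
- exists (- acos a).
  rewrite cos_neg, sin_neg, cos_acos, sin_acos, sqrt_eq, Rabs_left by assumption.
  now rewrite Ropp_involutive.
Qed.

Lemma unit_sq_re_ge (z : C) :
  Cmod z = 1 -> 0 < fst z -> fst z <= fst (z * z)%C -> z = 1%C.
Proof.
intros Hmod re_pos re_le. pose proof (Cmod_eq1_sq z Hmod) as Hsq.
destruct z as [a c]; cbn [fst snd Cmult] in *.
assert (a = 1) as -> by nra.
assert (c = 0) as -> by nra.
reflexivity.
Qed.

Lemma exists_argmin (f : nat -> R) n : (1 <= n)%nat ->
  exists k, (k < n)%nat /\ forall j, (j < n)%nat -> f k <= f j.
Proof.
induction n as [|n IH]; intro Hn; [lia|].
destruct (Nat.eq_dec n 0) as [-> | n_ne0].
- exists 0%nat. split; [lia|]. intros j hj. replace j with 0%nat by lia. lra.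
- destruct IH as [k [hk k_min]]; [lia|].
  destruct (Rle_lt_dec (f k) (f n)) as [fk_le | fn_lt].
  + exists k. split; [lia|]. intros j hj.
    destruct (Nat.eq_dec j n) as [-> | j_ne]; [exact fk_le|]. apply k_min; lia.
  + exists n. split; [lia|]. intros j hj.
    destruct (Nat.eq_dec j n) as [-> | j_ne]; [lra|].
    specialize (k_min j ltac:(lia)). lra.
Qed.

Lemma no_cycle_of_root_cos_lt0 (m : R -> R) :
  (forall v, m v = 0 -> cos v < 0) -> m PI <> 0 -> ~ exists n b, cycle_of m n b.
Proof.
intros root_cos m_PI [n [b [[n_ge1 [_ b_sq]] b_cycle]]].
assert (re_pos : forall j, (j < n)%nat -> 0 < fst (b j)).
{ intros j hj. destruct (b_cycle j hj) as [b_mod b_root].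
  destruct (Cmod_eq1_cis _ b_mod) as [w b_eq].
  pose proof (root_cos _ (b_root w b_eq)) as cos_lt.
  rewrite neg_cos in cos_lt. rewrite <- b_eq. cbn. lra. }
destruct (exists_argmin (fun j => fst (b j)) n n_ge1) as [k [hk k_min]].
assert (hk' : ((k + 1) mod n < n)%nat) by (apply Nat.mod_upper_bound; lia).
specialize (k_min _ hk'). cbn beta in k_min. rewrite (b_sq k hk) in k_min.
destruct (b_cycle k hk) as [b_mod b_root].
assert (bk1 : b k = 1%C) by exact (unit_sq_re_ge _ b_mod (re_pos k hk) k_min).
apply m_PI. rewrite <- (Rplus_0_l PI). apply b_root.
rewrite bk1. unfold cis. now rewrite cos_0, sin_0.
Qed.

Lemma pure_mask_of_root_cos_lt0 (m : R -> R) :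
  (forall v, m v = 0 -> cos v < 0) -> m PI <> 0 -> pure_mask m.
Proof.
intros root_cos m_PI. split.
- exact (no_sym_root_pair_of_root_cos_lt0 m root_cos).
- exact (no_cycle_of_root_cos_lt0 m root_cos m_PI).
Qed.

Theorem lemma6
  (theta : R -> R) (w0 : R) (lam : nat -> nat -> R) (nn : nat -> nat) (l0 : nat)
  (Hodd : forall x, theta (- x) = - theta x)
  (Hmono : forall x y, x <= y -> theta x <= theta y)
  (HC2 : forall x, ex_derive theta x /\ ex_derive (Derive theta) x /\
                   continuous (Derive (Derive theta)) x)
  (Hconst : forall x, PI / 3 < x -> theta x = PI / 4)
  (Hw0 : PI / 3 <= w0 < PI / 2)
  (Happrox : forall eps, 0 < eps -> exists N, forall l, (N <= l)%nat ->
     forall w, - PI <= w <= PI ->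
     INR l * Rabs (usum lam (nn l) (mMl theta w0 l) w - mMl theta w0 l w) <= eps)
  (Happrox1 : forall eps, 0 < eps -> exists N, forall l, (N <= l)%nat ->
     forall w, - PI <= w <= PI ->
     Rabs (usum lam (nn l) (Derive (mMl theta w0 l)) w - Derive (mMl theta w0 l) w)
       <= eps)
  (Hpi : forall l, usum lam (nn l) (mMl theta w0 l) PI <> 0)
  (Hinf : exists c, 0 < c /\ forall l, (l0 <= l)%nat ->
     c <= Rabs (usum lam (nn l) (mMl theta w0 l) 0)) :
  exists L, forall l, (l0 <= l)%nat -> (L <= l)%nat ->
    pure_mask (fun w => usum lam (nn l) (mMl theta w0 l) w /
                        usum lam (nn l) (mMl theta w0 l) 0).
Proof.
assert (HPI := PI_RGT_0).
assert (cos_PI4_pos : 0 < cos (PI / 4)) by (apply cos_gt_0; lra).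
destruct (Happrox (cos (PI / 4) / 2)) as [N HN]; [lra|].
exists (Nat.max N 1). intros l _ l_ge.
assert (l_ge1 : 1 <= INR l) by (apply (le_INR 1); lia).
set (u := usum lam (nn l) (mMl theta w0 l)).
assert (u_close : forall w, - PI <= w <= PI ->
          Rabs (u w - mMl theta w0 l w) < cos (PI / 4)).
{ intros w Hw. specialize (HN l ltac:(lia) w Hw).
  pose proof (Rabs_pos (u w - mMl theta w0 l w)). unfold u. nra. }
assert (u_root : forall v, u v = 0 -> cos v < 0).
{ refine (root_cos_lt0 u (mMl theta w0 l) (cos (PI / 4)) _ _ u_close).
  - intros w k. apply usum_period_Z.
  - exact (mMl_ge_cos_PI4 theta w0 Hodd Hmono Hconst Hw0 l). }
assert (u0_ne0 : u 0 <> 0)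
  by (intro u00; apply u_root in u00; rewrite cos_0 in u00; lra).
apply pure_mask_of_root_cos_lt0; unfold Rdiv.
- intros v uv0. apply u_root.
  apply (Rmult_eq_reg_r (/ u 0)); [lra|]. now apply Rinv_neq_0_compat.
- apply Rmult_integral_contrapositive_currified; [exact (Hpi l)|].
  now apply Rinv_neq_0_compat.
Qed.
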